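(* For every positive integer $m$ the following identity of formal power series in $\mathbb{Z}[[q]]$ holds: \[ \sum_{i=0}^\infty q^{-2i}q^{m(i^2+2i)}\frac{(1-q^{i+1})^3(1+q^{i+1})}{1-q} =(q)_{\infty}\sum_{0\leq k_m\leq\dots\leq k_2\leq k_1}\frac{q^{-2k_m}\,q^{\sum_{j=1}^m(k_j^2+2k_j)}}{(q)_{k_m}^2\,(q)_{k_1-k_2}(q)_{k_2-k_3}\cdots(q)_{k_{m-1}-k_m}}, \] where the sum on the right runs over all $m$-tuples of integers $(k_1,\dots,k_m)$ with $0\le k_m\le\dots\le k_1$ (for $m=1$ the product $(q)_{k_1-k_2}\cdots(q)_{k_{m-1}-k_m}$ is empty and equals $1$).
   Context: $(q)_k=(q;q)_k=\prod_{l=1}^{k}(1-q^l)$ for $k\ge 0$ (so $(q)_0=1$), and $(q)_\infty=\prod_{l=1}^\infty(1-q^l)$. Both sides are well-defined elements of $\mathbb{Z}[[q]]$ (the exponents $-2i+m(i^2+2i)$ and $-2k_m+\sum_j(k_j^2+2k_j)$ are nonnegative and tend to infinity). *)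

(* Formal power series over int are modelled as
   coefficient functions nat -> int (the coefficient of q^n). *)
From mathcomp Require Import all_boot all_order all_algebra.
Set Implicit Arguments. Unset Strict Implicit. Unset Printing Implicit Defensive.
Import GRing.Theory.
Local Open Scope ring_scope.

Definition fps := nat -> int.

Definition fps1 : fps := fun n => (n == 0%N)%:R.
Definition fpsX (k : nat) : fps := fun n => (n == k)%:R.
Definition fps_add (f g : fps) : fps := fun n => f n + g n.
Definition fps_sub (f g : fps) : fps := fun n => f n - g n.
Definition fps_mul (f g : fps) : fps :=
  fun n => \sum_(i < n.+1) f i * g (n - i)%N.
Definition fps_exp (f : fps) (k : nat) : fps := iter k (fps_mul f) fps1.
Definition fps_prod (s : seq fps) : fps := foldr fps_mul fps1 s.

(* Multiplicative inverse of a series whose constant term is a unit (+-1) of int: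
   g_0 = f_0,  g_n = - f_0 * sum_{i=1..n} f_i g_{n-i}. *)
Fixpoint fps_inv_aux (f : fps) (n : nat) : seq int :=
  match n with
  | 0 => [:: f 0%N]
  | n'.+1 => let s := fps_inv_aux f n' in
             rcons s (- f 0%N * \sum_(i < n) f i.+1 * nth 0 s (n' - i)%N)
  end.
Definition fps_inv (f : fps) : fps := fun n => nth 0 (fps_inv_aux f n) n.

Definition qpoch (k : nat) : fps :=
  fps_prod [seq fps_sub fps1 (fpsX l) | l <- iota 1 k].

Definition fps_lim (s : nat -> fps) (g : fps) : Prop :=
  forall n : nat, exists M : nat, forall M' : nat, (M <= M')%N -> s M' n = g n.

(* i-th summand of the left-hand side; q^{-2i} q^{m(i^2+2i)} = q^{m(i^2+2i) - 2i} *)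
Definition lhs_term (m i : nat) : fps :=
  fps_mul (fpsX (m * (i ^ 2 + 2 * i) - 2 * i)%N)
   (fps_mul (fps_exp (fps_sub fps1 (fpsX i.+1)) 3)
     (fps_mul (fps_add fps1 (fpsX i.+1)) (fps_inv (fps_sub fps1 (fpsX 1))))).

Definition lhs_partial (m M : nat) : fps :=
  fun n => \sum_(i < M) lhs_term m i n.

(* summand for s = [:: k_1; k_2; ...; k_m] *)
Definition rhs_term (s : seq nat) : fps :=
  fps_mul (fpsX ((\sum_(x <- s) (x ^ 2 + 2 * x)) - 2 * last 0%N s)%N)
   (fps_mul (fps_exp (fps_inv (qpoch (last 0%N s))) 2)
     (fps_prod [seq fps_inv (qpoch (nth 0%N s j - nth 0%N s j.+1)%N)
               | j <- iota 0 (size s).-1])).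

Definition rhs_partial (m M : nat) : fps :=
  fun n => \sum_(t : m.-tuple 'I_M | sorted (fun a b : nat => (b <= a)%N) (map val t))
             rhs_term (map val t) n.

From HB Require Import structures.
From mathcomp Require Import all_boot all_order all_algebra.
From mathcomp Require Import boolp zify ring.
Set Implicit Arguments. Unset Strict Implicit. Unset Printing Implicit Defensive.
Import GRing.Theory.
Local Open Scope ring_scope.

(* The right-hand side is a Bailey chain relative to a = q^2.  Its seed is the expansion
     1/(q)_k^2 = sum_(r <= k) q^(2(k-r)) alpha_r / ((q)_(k-r) (q)_(k+r+2)),
   with alpha_r = (1-q^(r+1))^3 (1+q^(r+1))/(1-q), certified by a WZ pair.  Each further
   summation index k_j is one application of Bailey's lemma, which multiplies alpha_r by
   q^(r^2+2r); the lemma itself is the finite identity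
     sum_j q^(j^2+cj) / ((q)_(d-j) (q)_j (q)_(c+j)) = 1 / ((q)_d (q)_(c+d)).
   Exchanging the order of summation then writes the right-hand side as
   sum_r q^((m-1)(r^2+2r)) alpha_r q^(r^2) sum_j q^(j^2+(2r+2)j) / ((q)_j (q)_(2r+2+j)),
   and the inner sum is 1/(q)_oo, the limit d -> oo of the same identity; the remaining
   summand is exactly the i = r term of the left-hand side.  Series are functions
   nat -> int whose ring laws are transferred from {poly int} by truncation; all limits
   are taken coefficientwise, through congruences modulo q^(N+1). *)

Definition fps_trunc (N : nat) (f : fps) : {poly int} := \poly_(i < N) f i.

Lemma coef_fps_trunc N f k : (k < N)%N -> (fps_trunc N f)`_k = f k.
Proof. by move=> kN; rewrite coef_poly kN. Qed.

Lemma coef_fps_trunc_mul N f g k :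
  (k < N)%N -> (fps_trunc N f * fps_trunc N g)`_k = fps_mul f g k.
Proof.
move=> kN; rewrite coefM; apply: eq_bigr => i _.
by rewrite !coef_fps_trunc //; move: (ltn_ord i); lia.
Qed.

Lemma fps_trunc1 N : (0 < N)%N -> fps_trunc N fps1 = 1.
Proof.
move=> N0; apply/polyP => i; rewrite coef_poly coef1 /fps1.
by case: i => [|i] /=; rewrite ?N0 //; case: ifP.
Qed.

Lemma fps_mulA : associative fps_mul.
Proof.
move=> f g h; apply: functional_extensionality_dep => n.
set t := fps_trunc n.+1.
have -> : fps_mul f (fps_mul g h) n = (t f * (t g * t h))`_n.
  rewrite coefM; apply: eq_bigr => i _.
  by rewrite coef_fps_trunc_mul ?coef_fps_trunc //; move: (ltn_ord i); lia.
have -> : fps_mul (fps_mul f g) h n = (t f * t g * t h)`_n.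
  rewrite coefM; apply: eq_bigr => i _.
  by rewrite coef_fps_trunc_mul ?coef_fps_trunc //; move: (ltn_ord i); lia.
by rewrite mulrA.
Qed.

Lemma fps_mulC : commutative fps_mul.
Proof.
move=> f g; apply: functional_extensionality_dep => n.
by rewrite -!(coef_fps_trunc_mul (N := n.+1)) // mulrC.
Qed.

Lemma fps_mul1 : left_id fps1 fps_mul.
Proof.
move=> f; apply: functional_extensionality_dep => n.
by rewrite -(coef_fps_trunc_mul (N := n.+1)) // fps_trunc1 // mul1r coef_fps_trunc.
Qed.

Lemma fps_mulDl : left_distributive fps_mul fps_add.
Proof.
move=> f g h; apply: functional_extensionality_dep => n.
by rewrite /fps_add /fps_mul -big_split; apply: eq_bigr => i _; rewrite mulrDl.
Qed.

Definition fps0 : fps := fun _ => 0.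
Definition fps_opp (f : fps) : fps := fun n => - f n.

Lemma fps_addA : associative fps_add.
Proof. by move=> f g h; apply: functional_extensionality_dep => n; rewrite /fps_add addrA. Qed.

Lemma fps_addC : commutative fps_add.
Proof. by move=> f g; apply: functional_extensionality_dep => n; rewrite /fps_add addrC. Qed.

Lemma fps_add0 : left_id fps0 fps_add.
Proof. by move=> f; apply: functional_extensionality_dep => n; rewrite /fps_add add0r. Qed.

Lemma fps_addN : left_inverse fps0 fps_opp fps_add.
Proof. by move=> f; apply: functional_extensionality_dep => n; rewrite /fps_add addNr. Qed.

Lemma fps1_neq0 : fps1 != fps0.
Proof. by apply/eqP => /(congr1 (fun f : fps => f 0%N)); rewrite /fps1 /fps0 /= => /eqP. Qed.

HB.instance Definition _ := Choice.on fps.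
HB.instance Definition _ := GRing.isZmodule.Build fps fps_addA fps_addC fps_add0 fps_addN.
HB.instance Definition _ :=
  GRing.Zmodule_isComNzRing.Build fps fps_mulA fps_mulC fps_mul1 fps_mulDl fps1_neq0.

(* Units are the series with constant term [1] or [-1]; [fps_inv] needs no case split
   because an integer unit is its own inverse. *)
Definition fps_unit : {pred fps} := fun f => f 0%N \is a GRing.unit.
Definition fps_invr (f : fps) : fps := if fps_unit f then fps_inv f else f.

Lemma coef0_fps_mul (f g : fps) : (f * g) 0%N = f 0%N * g 0%N.
Proof. by rewrite /GRing.mul /= /fps_mul big_ord1. Qed.

Lemma fps_inv_aux_size f n : size (fps_inv_aux f n) = n.+1.
Proof. by elim: n => [|n IH] //=; rewrite size_rcons IH. Qed.

Lemma nth_fps_inv_aux f n k : (k <= n)%N -> nth 0 (fps_inv_aux f n) k = fps_inv f k.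
Proof.
elim: n => [|n IH]; first by rewrite leqn0 => /eqP ->.
rewrite leq_eqVlt => /orP [/eqP -> //|kn].
by rewrite /= nth_rcons fps_inv_aux_size kn IH.
Qed.

Lemma fps_invS f n :
  fps_inv f n.+1 = - f 0%N * \sum_(i < n.+1) f i.+1 * fps_inv f (n - i)%N.
Proof.
rewrite /fps_inv /= nth_rcons fps_inv_aux_size ltnn eqxx; congr (_ * _).
by apply: eq_bigr => i _; rewrite nth_fps_inv_aux // leq_subr.
Qed.

Lemma fps_mulV f : fps_unit f -> fps_mul f (fps_inv f) = fps1.
Proof.
move=> uf; have f0 : f 0%N * f 0%N = 1 := mulVr uf.
apply: functional_extensionality_dep => -[|n]; first by rewrite /fps_mul big_ord1.
rewrite /fps_mul big_ord_recl subn0 fps_invS /fps1 /= mulrA mulrN f0 mulN1r addrC.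
by apply/eqP; rewrite subr_eq0; apply/eqP/eq_bigr => i _; rewrite subSS.
Qed.

Lemma fps_mulVr : {in fps_unit, left_inverse 1 fps_invr *%R}.
Proof. by move=> f uf; rewrite /fps_invr ifT // [LHS]fps_mulC fps_mulV. Qed.

Lemma fps_unitPl (f g : fps) : g * f = 1 -> fps_unit f.
Proof.
move/(congr1 (fun h : fps => h 0%N)); rewrite coef0_fps_mul => gf.
by apply/unitrP; exists (g 0%N); rewrite [f _ * _]mulrC gf.
Qed.

Lemma fps_invr_out : {in [predC fps_unit], fps_invr =1 id}.
Proof. by move=> f; rewrite inE /= /fps_invr => /negbTE nuf; rewrite ifF. Qed.

HB.instance Definition _ :=
  GRing.ComNzRing_hasMulInverse.Build fps fps_mulVr fps_unitPl fps_invr_out.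

Lemma fps1E : fps1 = 1. Proof. by []. Qed.
Lemma fps_addE (f g : fps) : fps_add f g = f + g. Proof. by []. Qed.
Lemma fps_subE (f g : fps) : fps_sub f g = f - g. Proof. by []. Qed.
Lemma fps_mulE (f g : fps) : fps_mul f g = f * g. Proof. by []. Qed.

Lemma fps_invE (f : fps) : f \is a GRing.unit -> fps_inv f = f^-1.
Proof. by move=> uf; change (fps_inv f = fps_invr f); rewrite /fps_invr ifT. Qed.

Definition q : fps := fpsX 1.

Lemma coef_fpsXM a (f : fps) n :
  (fpsX a * f) n = if (a <= n)%N then f (n - a)%N else 0.
Proof.
rewrite -[(fpsX a * f) n]/(fps_mul (fpsX a) f n) -(coef_fps_trunc_mul (N := n.+1)) //.
have [an|na] := leqP a n.
  have -> : fps_trunc n.+1 (fpsX a) = 'X^a.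
    apply/polyP => i; rewrite coef_poly coefXn /fpsX.
    by case: ltnP => // ni; rewrite eq_sym; case: eqP => //; lia.
  by rewrite coefXnM ltnNge an /= coef_fps_trunc //; lia.
have -> : fps_trunc n.+1 (fpsX a) = 0.
  apply/polyP => i; rewrite coef_poly coef0 /fpsX.
  by case: ltnP => // ni; case: eqP => //; lia.
by rewrite mul0r coef0.
Qed.

Lemma fpsXE k : fpsX k = q ^+ k.
Proof.
elim: k => [|k IH] //; rewrite exprS -IH; apply: functional_extensionality_dep => n.
by rewrite coef_fpsXM /fpsX; case: n => [|n] //=; rewrite subn1.
Qed.

Lemma coef_qXnM a (f : fps) n :
  (q ^+ a * f) n = if (a <= n)%N then f (n - a)%N else 0.
Proof. by rewrite -fpsXE coef_fpsXM. Qed.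

Lemma fps_expE (f : fps) k : fps_exp f k = f ^+ k.
Proof. by elim: k => [|k IH] //=; rewrite IH exprS. Qed.

Lemma fps_prodE (s : seq fps) : fps_prod s = \prod_(f <- s) f.
Proof. by elim: s => [|f s IH]; rewrite ?big_nil ?big_cons //= IH. Qed.

Lemma coef_fpsD (f g : fps) n : (f + g) n = f n + g n.
Proof. by []. Qed.

Lemma coef_fpsB (f g : fps) n : (f - g) n = f n - g n.
Proof. by []. Qed.

Lemma coef_fps_sum (I : Type) (r : seq I) (P : pred I) (F : I -> fps) n :
  (\sum_(i <- r | P i) F i) n = \sum_(i <- r | P i) F i n.
Proof. by elim/big_rec2: _ => [|i x y Pi <-]. Qed.

Definition qpoch_from (a t : nat) : fps := \prod_(i < t) (1 - q ^+ (a + i)).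

Lemma qpochE k : qpoch k = qpoch_from 1 k.
Proof.
rewrite /qpoch fps_prodE big_map /qpoch_from -(subn0 k) -{1}(addn0 1%N) iotaDl big_map.
rewrite [in RHS]subn0 -(big_mkord xpredT (fun i => 1 - q ^+ (1 + i))) /index_iota subn0.
by apply: eq_bigr => i _; rewrite fpsXE.
Qed.

Lemma qpoch_fromS a t : qpoch_from a t.+1 = (1 - q ^+ a) * qpoch_from a.+1 t.
Proof.
by rewrite /qpoch_from big_ord_recl addn0; congr (_ * _); apply: eq_bigr => i _; rewrite addSnnS.
Qed.

Lemma qpoch_fromD a t1 t2 :
  qpoch_from a (t1 + t2) = qpoch_from a t1 * qpoch_from (a + t1) t2.
Proof.
by rewrite /qpoch_from big_split_ord; congr (_ * _); apply: eq_bigr => i _; rewrite addnA.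
Qed.

Lemma qpoch0 : qpoch 0 = 1.
Proof. by rewrite qpochE /qpoch_from big_ord0. Qed.

Lemma qpochD a t : qpoch (a + t) = qpoch a * qpoch_from a.+1 t.
Proof. by rewrite !qpochE qpoch_fromD add1n. Qed.

Lemma qpochS k : qpoch k.+1 = qpoch k * (1 - q ^+ k.+1).
Proof. by rewrite -addn1 qpochD /qpoch_from big_ord1 addn0 addn1. Qed.

Lemma coef0_qpoch_from a t : (0 < a)%N -> qpoch_from a t 0%N = 1.
Proof.
move=> a0; rewrite /qpoch_from; elim/big_rec: _ => [|i x _ x0] //.
rewrite coef0_fps_mul x0 mulr1 coef_fpsB -[q ^+ _]mulr1 coef_qXnM ifF ?subr0 //.
by apply/negbTE; rewrite -ltnNge; lia.
Qed.

Lemma qpoch_from_unit a t : (0 < a)%N -> qpoch_from a t \is a GRing.unit.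
Proof. by move=> a0; rewrite -[_ \is a _]/(qpoch_from a t 0%N \is a _) coef0_qpoch_from. Qed.

Lemma qpoch_unit k : qpoch k \is a GRing.unit.
Proof. by rewrite qpochE qpoch_from_unit. Qed.

Lemma qpoch_fromE a t : qpoch_from a.+1 t = qpoch (a + t) / qpoch a.
Proof. by rewrite qpochD mulrC mulrA mulVr ?mul1r // qpoch_unit. Qed.

Lemma qpochVS k : (qpoch k)^-1 = (1 - q ^+ k.+1) / qpoch k.+1.
Proof. by apply: (mulrI (qpoch_unit k)); rewrite mulrA -qpochS !divrr ?qpoch_unit. Qed.

Fixpoint qbinom (d j : nat) : fps :=
  match d, j with
  | _, 0 => 1
  | 0, _.+1 => 0
  | d'.+1, j'.+1 => q ^+ j'.+1 * qbinom d' j'.+1 + qbinom d' j'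
  end.

Lemma qbinomS d j :
  qbinom d.+1 j = q ^+ j * qbinom d j + (if j is j'.+1 then qbinom d j' else 0).
Proof. by case: j => [|j] //=; rewrite expr0 mul1r addr0; case: d. Qed.

Lemma qbinom_small d j : (d < j)%N -> qbinom d j = 0.
Proof. by elim: d j => [|d IH] [|j] //= dj; rewrite !IH ?mulr0 ?addr0 //; lia. Qed.

Lemma qbinom_qpoch d j : (j <= d)%N -> qbinom d j * qpoch j * qpoch (d - j) = qpoch d.
Proof.
elim: d j => [|d IH] [|j] //=; rewrite ?qpoch0 ?mulr1 ?mul1r ?subn0 // => jd.
have [jd'|dj] := ltnP j d; last first.
  have -> : j = d by lia.
  rewrite qbinom_small // mulr0 add0r subnn qpoch0 mulr1.
  by rewrite qpochS mulrA; have := IH d (leqnn d); rewrite subnn qpoch0 mulr1 => ->.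
set e := (d - j.+1)%N; have de : (d.+1 - j.+1 = e.+1)%N by rewrite /e; lia.
have E1 := IH j.+1 jd'; have E2 := IH j (ltnW jd'); rewrite -/e in E1.
have de' : (d - j = e.+1)%N by rewrite /e; lia.
rewrite de' in E2; rewrite de.
have -> : qpoch d.+1 = q ^+ j.+1 * (1 - q ^+ e.+1) * qpoch d + (1 - q ^+ j.+1) * qpoch d.
  rewrite qpochS (_ : d.+1 = j.+1 + e.+1)%N; last by rewrite /e; lia.
  by rewrite exprD; ring.
by rewrite -{1}E1 -E2 !qpochS; ring.
Qed.

Definition qbinom_durfee_sum (d c : nat) : fps :=
  \sum_(j < d.+1) qbinom d j * q ^+ (j * j + c * j) * qpoch_from (c + j).+1 (d - j).

Lemma qbinom_durfee_sumS d c : qbinom_durfee_sum d.+1 c = qbinom_durfee_sum d c.+1.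
Proof.
rewrite /qbinom_durfee_sum.
under eq_bigr => j _ do rewrite qbinomS !mulrDl.
rewrite big_split /= [X in X + _]big_ord_recr /= qbinom_small // mulr0 !mul0r addr0.
rewrite [X in _ + X]big_ord_recl /= !mul0r add0r.
rewrite addrC; apply/esym/(canRL (subrK _)); rewrite -sumrB; apply: eq_bigr => i _.
rewrite /bump /= add0n.
have -> : (d.+1 - i = (d - i).+1)%N by move: (ltn_ord i); lia.
rewrite qpoch_fromS (_ : d.+1 - (1 + i) = d - i)%N; last by lia.
rewrite (_ : (c.+1 + i).+1 = (c + i).+2)%N; last by lia.
rewrite (_ : (c + (1 + i)).+1 = (c + i).+2)%N; last by lia.
rewrite (_ : (1 + i) * (1 + i) + c * (1 + i) = i * i + c.+1 * i + (c + i).+1)%N; last by lia.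
rewrite (_ : i * i + c.+1 * i = i + (i * i + c * i))%N; last by lia.
by rewrite !exprD; ring.
Qed.

Lemma qbinom_durfee_sum1 d c : qbinom_durfee_sum d c = 1.
Proof.
elim: d c => [|d IH] c; last by rewrite qbinom_durfee_sumS IH.
by rewrite /qbinom_durfee_sum big_ord1 /qpoch_from big_ord0 !muln0 expr0 !mulr1.
Qed.

Lemma qbinomE d j : (j <= d)%N -> qbinom d j = qpoch d / qpoch (d - j) / qpoch j.
Proof. by move=> jd; rewrite -(qbinom_qpoch jd) !mulrK ?qpoch_unit. Qed.

Lemma qdurfee_sum d c :
  \sum_(j < d.+1) q ^+ (j * j + c * j) / qpoch (d - j) / qpoch j / qpoch (c + j)
  = (qpoch d)^-1 / qpoch (c + d).
Proof.
set S := \sum_(j < _) _.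
have DS : qbinom_durfee_sum d c = qpoch (c + d) * (qpoch d * S).
  rewrite /S !mulr_sumr; apply: eq_bigr => j _.
  have jd : (j <= d)%N by rewrite -ltnS.
  rewrite qbinomE // qpoch_fromE (_ : c + j + (d - j) = c + d)%N; last by lia.
  by ring.
by rewrite -[S](mulKr (qpoch_unit d)) -(mulKr (qpoch_unit (c + d)) (_ * S)) -DS
  qbinom_durfee_sum1 mulr1.
Qed.

Lemma wz_sum (V : zmodType) (F G : nat -> nat -> V) n :
  (forall n r, (r <= n)%N -> F n.+1 r - F n r = G n r.+1 - G n r) ->
  (forall n, F n.+1 n.+1 = - G n n.+1) -> (forall n, G n 0%N = 0) ->
  \sum_(r < n.+1) F n r = F 0%N 0%N.
Proof.
move=> FG Fdiag G0; elim: n => [|n IH]; first by rewrite big_ord1.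
rewrite big_ord_recr /= Fdiag -IH.
have -> : \sum_(r < n.+1) F n.+1 r = \sum_(r < n.+1) (F n r + (G n r.+1 - G n r)).
  by apply: eq_bigr => r _; rewrite -FG -1?ltnS // addrC subrK.
rewrite big_split /= -(big_mkord xpredT (fun r => G n r.+1 - G n r)) telescope_sumr //.
by rewrite G0 subr0 addrK.
Qed.

Definition alpha (r : nat) : fps := (1 - q ^+ r.+1) ^+ 3 * (1 + q ^+ r.+1) / qpoch 1.

Definition wz_F n r : fps :=
  qpoch n ^+ 2 * (q ^+ (2 * (n - r)) * alpha r / qpoch (n - r) / qpoch (n + r + 2)).

Definition wz_G n r : fps :=
  - (q ^+ (2 * (n.+1 - r)) * (1 - q ^+ r.+1) ^+ 2 * (1 - q ^+ r) ^+ 2 / qpoch 1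
     * qpoch n ^+ 2 / qpoch (n.+1 - r) / qpoch (n + r + 2)).

Lemma wz_FG n r : (r <= n)%N -> wz_F n.+1 r - wz_F n r = wz_G n r.+1 - wz_G n r.
Proof.
move=> rn; rewrite /wz_F /wz_G /alpha.
have [d ->] : exists d, n = (r + d)%N by exists (n - r)%N; lia.
rewrite (_ : (r + d).+1 - r = d.+1)%N; last by lia.
rewrite (_ : r + d - r = d)%N; last by lia.
rewrite (_ : (r + d).+1 - r.+1 = d)%N; last by lia.
rewrite (_ : (r + d).+1 + r + 2 = (r + d + r + 2).+1)%N; last by lia.
rewrite (_ : r + d + r.+1 + 2 = (r + d + r + 2).+1)%N; last by lia.
rewrite (qpochS (r + d)) (qpochVS d) (qpochVS (r + d + r + 2)).
rewrite (_ : 2 * d.+1 = d + d + 2)%N; last by lia.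
rewrite (_ : 2 * d = d + d)%N; last by lia.
rewrite (_ : (r + d + r + 2).+1 = r + r + d + 3)%N; last by lia.
rewrite (_ : (r + d).+1 = r + d + 1)%N; last by lia.
rewrite (_ : r.+2 = r + 2)%N; last by lia.
rewrite (_ : r.+1 = r + 1)%N; last by lia.
rewrite (_ : d.+1 = d + 1)%N; last by lia.
by rewrite !exprD; ring.
Qed.

Lemma wz_F_diag n : wz_F n.+1 n.+1 = - wz_G n n.+1.
Proof.
rewrite /wz_F /wz_G /alpha opprK !subnn (qpochS n).
rewrite (_ : n.+1 + n.+1 + 2 = (n + n.+1 + 2).+1)%N; last by lia.
rewrite (qpochVS (n + n.+1 + 2)) (_ : (n + n.+1 + 2).+1 = n + n + 4)%N; last by lia.
rewrite (_ : n.+2 = n + 2)%N; last by lia.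
rewrite (_ : n.+1 = n + 1)%N; last by lia.
by rewrite !muln0 !exprD; ring.
Qed.

Lemma wz_G0 n : wz_G n 0 = 0.
Proof. by rewrite /wz_G expr0 subrr expr0n /= !mulr0 !mul0r oppr0. Qed.

Lemma wz_F00 : wz_F 0 0 = 1.
Proof.
rewrite /wz_F /alpha subnn muln0 expr0 qpoch0 expr1n invr1 !mul1r mulr1.
have -> : (1 - q ^+ 1) ^+ 3 * (1 + q ^+ 1) = qpoch 1 * qpoch 2 by rewrite !qpochS qpoch0; ring.
by rewrite add0n [qpoch 1 * _]mulrC mulrK ?divrr ?qpoch_unit.
Qed.

Lemma qpoch_sqrV k :
  (qpoch k)^-1 ^+ 2 =
    \sum_(r < k.+1) q ^+ (2 * (k - r)) * alpha r / qpoch (k - r) / qpoch (k + r + 2).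
Proof.
rewrite -[LHS]mulr1 -wz_F00 -(wz_sum k wz_FG wz_F_diag wz_G0) mulr_sumr.
by apply: eq_bigr => r _; rewrite /wz_F exprVn mulKr // unitrX // qpoch_unit.
Qed.

Lemma sum_triangle_exchange (V : nmodType) N (A : nat -> nat -> V) :
  \sum_(k < N) \sum_(r < k.+1) A k r = \sum_(r < N) \sum_(j < N - r) A (r + j)%N r.
Proof.
elim: N => [|N IH]; first by rewrite !big_ord0.
rewrite big_ord_recr /= IH.
rewrite [RHS](eq_bigr (fun r : 'I_N.+1 => \sum_(j < N - r) A (r + j)%N r + A N r)); last first.
  move=> r _; have -> : (N.+1 - r = (N - r).+1)%N by move: (ltn_ord r); lia.
  by rewrite big_ord_recr /=; congr (_ + A _ _); move: (ltn_ord r); lia.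
by rewrite big_split /= [X in _ = X + _]big_ord_recr /= subnn big_ord0 addr0.
Qed.

(* Bailey's lemma for a = q^2, with (aq;q)_n replaced by (q;q)_(n+2). *)
Lemma bailey_lemma (c : nat -> fps) n :
  \sum_(k < n.+1) q ^+ (k * k) / qpoch (n - k) *
      \sum_(r < k.+1) q ^+ (2 * (k - r)) * c r / qpoch (k - r) / qpoch (k + r + 2)
  = \sum_(r < n.+1) q ^+ (r * r) * c r / qpoch (n - r) / qpoch (n + r + 2).
Proof.
under eq_bigr => k _ do rewrite mulr_sumr.
rewrite (sum_triangle_exchange _ (fun k r => q ^+ (k * k) / qpoch (n - k) *
  (q ^+ (2 * (k - r)) * c r / qpoch (k - r) / qpoch (k + r + 2)))).
apply: eq_bigr => r _; have rn : (r <= n)%N by rewrite -ltnS.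
have := qdurfee_sum (n - r) (2 * r + 2).
rewrite (_ : 2 * r + 2 + (n - r) = n + r + 2)%N; last by lia.
rewrite (_ : n.+1 - r = (n - r).+1)%N; last by lia.
rewrite -!mulrA => <-; rewrite !mulr_sumr; apply: eq_bigr => j _.
rewrite (_ : n - (r + j) = n - r - j)%N; last by lia.
rewrite (_ : r + j - r = j)%N; last by lia.
rewrite (_ : r + j + r + 2 = 2 * r + 2 + j)%N; last by lia.
rewrite (_ : (r + j) * (r + j) = r * r + j * j + 2 * r * j)%N; last by nia.
rewrite (_ : (2 * r + 2) * j = 2 * r * j + 2 * j)%N; last by nia.
by rewrite !exprD; ring.
Qed.

Fixpoint bailey_chain (m k : nat) : fps :=
  if m is m'.+1 then q ^+ (k * k + 2 * k) * \sum_(l < k.+1) bailey_chain m' l / qpoch (k - l)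
  else q ^+ (k * k) * (qpoch k)^-1 ^+ 2.

Lemma bailey_chainE m k :
  bailey_chain m k = q ^+ (k * k) * \sum_(r < k.+1)
    q ^+ (2 * (k - r)) * (q ^+ (m * (r * r + 2 * r)) * alpha r) / qpoch (k - r) / qpoch (k + r + 2).
Proof.
elim: m k => [|m IH] k /=.
  by rewrite qpoch_sqrV; congr (_ * _); apply: eq_bigr => r _; rewrite mul0n mul1r.
have -> : \sum_(l < k.+1) bailey_chain m l / qpoch (k - l) = \sum_(l < k.+1) q ^+ (l * l) /
    qpoch (k - l) * \sum_(r < l.+1) q ^+ (2 * (l - r)) * (q ^+ (m * (r * r + 2 * r)) * alpha r) /
    qpoch (l - r) / qpoch (l + r + 2).
  by apply: eq_bigr => l _; rewrite IH mulrAC.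
rewrite (bailey_lemma (fun r => q ^+ (m * (r * r + 2 * r)) * alpha r)) !mulr_sumr.
apply: eq_bigr => r _; have rk : (r <= k)%N by rewrite -ltnS.
rewrite (_ : k * k + 2 * k = k * k + 2 * (k - r) + 2 * r)%N; last by lia.
by rewrite mulSn !exprD; ring.
Qed.

Lemma rhs_termE s : rhs_term s =
  q ^+ (\sum_(x <- s) (x ^ 2 + 2 * x) - 2 * last 0 s)%N * ((qpoch (last 0%N s))^-1 ^+ 2 *
    \prod_(j <- iota 0 (size s).-1) (qpoch (nth 0 s j - nth 0 s j.+1)%N)^-1).
Proof.
rewrite /rhs_term fps_prodE big_map fps_expE fpsXE fps_invE ?qpoch_unit //.
by congr (_ * (_ * _)); apply: eq_bigr => j _; rewrite fps_invE ?qpoch_unit.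
Qed.

Lemma double_last_le_sum (y : nat) s :
  (2 * last y s <= \sum_(x <- y :: s) (x ^ 2 + 2 * x))%N.
Proof.
elim: s y => [|z s IH] y /=; rewrite big_cons; first by rewrite big_nil; lia.
by have := IH z; lia.
Qed.

Lemma rhs_term1 k : rhs_term [:: k] = bailey_chain 0 k.
Proof.
by rewrite rhs_termE /= big_cons !big_nil mulr1 addn0 addnK mulnn.
Qed.

Lemma rhs_term_cons2 k l s :
  rhs_term [:: k, l & s] = q ^+ (k * k + 2 * k) / qpoch (k - l) * rhs_term (l :: s).
Proof.
rewrite !rhs_termE big_cons -addnBA; last exact: double_last_le_sum.
rewrite mulnn exprD [iota 0 _]/= [\prod_(j <- _ :: _) _]big_cons (iotaDl 1 0) big_map /=.
by ring.
Qed.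

(* [sum_nonincr m b F] sums [F] over the non-increasing sequences of length [m]
   with entries below [b]. *)
Fixpoint sum_nonincr (V : nmodType) (m b : nat) (F : seq nat -> V) : V :=
  if m is m'.+1 then \sum_(k < b) sum_nonincr m' k.+1 (fun s => F (nat_of_ord k :: s))
  else F [::].

Lemma sum_nonincrE (V : nmodType) m M b (F : seq nat -> V) : (b <= M)%N ->
  \sum_(t : m.-tuple 'I_M | sorted geq (map val t) && all (fun x => x < b)%N (map val t))
     F (map val t) = sum_nonincr m b F.
Proof.
elim: m b F => [|m IH] b F bM /=.
  rewrite (eq_bigl (fun t => t == [tuple])); last by move=> t; rewrite tuple0 eqxx.
  by rewrite big_pred1_eq.
rewrite (reindex (fun p : 'I_M * m.-tuple 'I_M => [tuple of p.1 :: p.2])) /=; last first.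
  exists (fun t => (thead t, [tuple of behead t])).
    by move=> [x t] _ /=; rewrite theadE; congr (_, _); apply: val_inj.
  by move=> t _; rewrite -tuple_eta.
rewrite (eq_bigl (fun p : 'I_M * m.-tuple 'I_M => (p.1 < b)%N &&
   (sorted geq (map val p.2) && all (fun x => x < p.1.+1)%N (map val p.2)))); last first.
  move=> [x t] /=; rewrite (path_sortedE (leT := geq)); last by move=> ? ? ? /=; lia.
  set s := map val t; case: (ltnP x b) => xb /=; last by rewrite andbF.
  have -> : all (geq x) s = all (fun y => y < x.+1)%N s by apply: eq_all => y /=.
  case Hs: (all (fun y => y < x.+1)%N s); rewrite /= ?andbF //.
  have sb : all (fun y => y < b)%N s by apply/allP => y /(allP Hs) /=; lia.
  by rewrite sb andbT.
rewrite -(pair_big_dep (fun k : 'I_M => (k < b)%N) (fun k (t : m.-tuple 'I_M) =>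
  sorted geq (map val t) && all (fun x => x < k.+1)%N (map val t))
  (fun k (t : m.-tuple 'I_M) => F (val k :: map val t))).
rewrite (eq_bigr (fun k : 'I_M => sum_nonincr m k.+1 (fun s => F (val k :: s)))).
  by rewrite big_ord_narrow.
by move=> k _; rewrite (IH k.+1 (fun s => F (val k :: s))) // ltn_ord.
Qed.

Lemma sum_nonincr_mulr (R : pzSemiRingType) m b c (F : seq nat -> R) :
  sum_nonincr m b (fun s => c * F s) = c * sum_nonincr m b F.
Proof. by elim: m b F => [|m IH] b F //=; rewrite mulr_sumr; apply: eq_bigr => k _; apply: IH. Qed.

Lemma sum_nonincr_rhs_term m k :
  sum_nonincr m k.+1 (fun s => rhs_term (k :: s)) = bailey_chain m k.
Proof.
elim: m k => [|m IH] k /=; first exact: rhs_term1.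
rewrite mulr_sumr; apply: eq_bigr => l _.
rewrite mulrCA mulrC -IH -sum_nonincr_mulr; congr sum_nonincr.
by apply: functional_extensionality_dep => s; rewrite rhs_term_cons2.
Qed.

Lemma rhs_partialE m M : rhs_partial m.+1 M = \sum_(k < M) bailey_chain m k.
Proof.
under eq_bigr => k _ do rewrite -sum_nonincr_rhs_term.
change (rhs_partial m.+1 M = sum_nonincr m.+1 M rhs_term).
apply: functional_extensionality_dep => n.
rewrite -(sum_nonincrE _ _ (leqnn M)) coef_fps_sum; apply: eq_bigl => t.
have -> : all (fun x => x < M)%N (map val t).
  by apply/allP => x /mapP [y _ ->]; apply: ltn_ord.
by rewrite andbT.
Qed.

Definition fps_eqn (N : nat) (f g : fps) := forall i, (i <= N)%N -> f i = g i.

Lemma fps_eqn_refl N f : fps_eqn N f f.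
Proof. by []. Qed.

Lemma fps_eqn_sym N f g : fps_eqn N f g -> fps_eqn N g f.
Proof. by move=> fg i iN; rewrite fg. Qed.

Lemma fps_eqn_trans N f g h : fps_eqn N f g -> fps_eqn N g h -> fps_eqn N f h.
Proof. by move=> fg gh i iN; rewrite fg ?gh. Qed.

Lemma fps_eqnM N f f' g g' :
  fps_eqn N f f' -> fps_eqn N g g' -> fps_eqn N (f * g) (f' * g').
Proof.
move=> ff gg i iN; apply: eq_bigr => j _.
by rewrite ff ?gg //; move: (ltn_ord j); lia.
Qed.

Lemma fps_eqnMl N f g g' : fps_eqn N g g' -> fps_eqn N (f * g) (f * g').
Proof. exact/fps_eqnM/fps_eqn_refl. Qed.

Lemma fps_eqn_sum N (I : Type) (r : seq I) (P : pred I) (F G : I -> fps) :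
  (forall i, P i -> fps_eqn N (F i) (G i)) ->
  fps_eqn N (\sum_(i <- r | P i) F i) (\sum_(i <- r | P i) G i).
Proof.
move=> FG; elim/big_rec2: _ => [//|i x y Pi xy j jN].
by rewrite coef_fpsD FG ?xy.
Qed.

Lemma fps_eqn_prod N (I : Type) (r : seq I) (P : pred I) (F G : I -> fps) :
  (forall i, P i -> fps_eqn N (F i) (G i)) ->
  fps_eqn N (\prod_(i <- r | P i) F i) (\prod_(i <- r | P i) G i).
Proof.
by move=> FG; elim/big_rec2: _ => [//|i x y Pi xy]; apply: fps_eqnM (FG i Pi) xy.
Qed.

Lemma fps_eqnV N f g : f \is a GRing.unit -> g \is a GRing.unit ->
  fps_eqn N f g -> fps_eqn N f^-1 g^-1.
Proof.
move=> uf ug fg.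
have -> : f^-1 = g^-1 - f^-1 * g^-1 * (f - g).
  by rewrite mulrBr mulrAC mulVr // mul1r mulrVK // opprB addrC subrK.
have : fps_eqn N (f^-1 * g^-1 * (f - g)) (f^-1 * g^-1 * 0).
  by apply: fps_eqnMl => i iN; rewrite coef_fpsB fg // subrr.
by rewrite mulr0 => h i iN; rewrite coef_fpsB h // subr0.
Qed.

Lemma fps_eqn_qXnM N a f : (N < a)%N -> fps_eqn N (q ^+ a * f) 0.
Proof. by move=> Na i iN; rewrite coef_qXnM ifF //; apply/negbTE; rewrite -ltnNge; lia. Qed.

Lemma fps_eqn_sum_tail N n M (F : nat -> fps) :
  (forall j, (n <= j)%N -> fps_eqn N (F j) 0) -> (n <= M)%N ->
  fps_eqn N (\sum_(j < M) F j) (\sum_(j < n) F j).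
Proof.
move=> F0; elim: M => [|M IH] nM; first by have -> : n = 0%N by lia.
have [nM'|Mn] := leqP n M; last by have -> : n = M.+1 by lia.
by move=> i iN; rewrite big_ord_recr /= -(IH nM' i iN) coef_fpsD F0 // addr0.
Qed.

Lemma qpoch_eqn N n : (N <= n)%N -> fps_eqn N (qpoch n) (qpoch N).
Proof.
move=> Nn; rewrite -(subnKC Nn) qpochD.
rewrite -{2}[qpoch N]mulr1; apply: fps_eqnMl.
have := @fps_eqn_prod N _ (index_enum 'I_(n - N)) xpredT
  (fun i => 1 - q ^+ (N.+1 + i)) (fun _ => 1).
rewrite big1_eq; apply=> i _ j jN.
by rewrite coef_fpsB -[q ^+ _]mulr1 coef_qXnM ifF ?subr0 //; apply/negbTE; rewrite -ltnNge; lia.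
Qed.

Lemma qpochV_eqn N n : (N <= n)%N -> fps_eqn N (qpoch n)^-1 (qpoch N)^-1.
Proof. by move=> Nn; apply: fps_eqnV (qpoch_unit _) (qpoch_unit _) (qpoch_eqn Nn). Qed.

Definition durfee_partial (c t : nat) : fps :=
  \sum_(j < t) q ^+ (j * j + c * j) / qpoch j / qpoch (c + j).

(* The limit [d -> oo] of [qdurfee_sum d c], taken along [d = 2 N]. *)
Lemma qpoch_mul_durfee_partial N c : fps_eqn N (qpoch N * durfee_partial c N.+1) 1.
Proof.
set F := fun j : nat => q ^+ (j * j + c * j) / qpoch (N + N - j) / qpoch j / qpoch (c + j).
have Etail : fps_eqn N (\sum_(j < (N + N).+1) F j) (\sum_(j < N.+1) F j).
  apply: fps_eqn_sum_tail => [j Nj|]; last by lia.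
  by rewrite /F -!mulrA; apply: fps_eqn_qXnM; nia.
have Ehead : fps_eqn N (\sum_(j < N.+1) F j) ((qpoch N)^-1 * durfee_partial c N.+1).
  rewrite mulr_sumr; apply: fps_eqn_sum => j _.
  have -> : F j = (qpoch (N + N - j))^-1 * (q ^+ (j * j + c * j) / qpoch j / qpoch (c + j)).
    by rewrite /F; ring.
  by apply: fps_eqnM => //; apply: qpochV_eqn; move: (ltn_ord j); lia.
have key : fps_eqn N ((qpoch N)^-1 * durfee_partial c N.+1) ((qpoch N)^-1 * (qpoch N)^-1).
  apply: fps_eqn_trans (fps_eqn_sym Ehead) _; apply: fps_eqn_trans (fps_eqn_sym Etail) _.
  by rewrite /F qdurfee_sum; apply: fps_eqnM; apply: qpochV_eqn; lia.
have := fps_eqnMl (qpoch N * qpoch N) key.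
rewrite mulrACA [X in fps_eqn _ _ X]mulrACA divrr ?qpoch_unit // !mul1r.
by apply.
Qed.

Lemma sum_bailey_chainE m M : \sum_(k < M) bailey_chain m k =
  \sum_(r < M) q ^+ (m * (r * r + 2 * r)) * alpha r * q ^+ (r * r) *
    durfee_partial (2 * r + 2) (M - r).
Proof.
under eq_bigr => k _ do rewrite bailey_chainE mulr_sumr.
rewrite (sum_triangle_exchange _ (fun k r => q ^+ (k * k) * (q ^+ (2 * (k - r)) *
  (q ^+ (m * (r * r + 2 * r)) * alpha r) / qpoch (k - r) / qpoch (k + r + 2)))).
apply: eq_bigr => r _; rewrite /durfee_partial mulr_sumr; apply: eq_bigr => j _.
rewrite (_ : r + j - r = j)%N; last by lia.
rewrite (_ : r + j + r + 2 = 2 * r + 2 + j)%N; last by lia.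
rewrite (_ : (r + j) * (r + j) = r * r + (j * j + 2 * r * j))%N; last by nia.
rewrite (_ : (2 * r + 2) * j = 2 * r * j + 2 * j)%N; last by nia.
by rewrite !exprD; ring.
Qed.

Lemma durfee_partial_tail N r t : (N.+1 - r <= t)%N ->
  fps_eqn N (q ^+ (r * r) * durfee_partial (2 * r + 2) t)
            (q ^+ (r * r) * durfee_partial (2 * r + 2) (N.+1 - r)).
Proof.
move=> rt; rewrite /durfee_partial !mulr_sumr.
apply: (fps_eqn_sum_tail (F := fun j => q ^+ (r * r) *
  (q ^+ (j * j + (2 * r + 2) * j) / qpoch j / qpoch (2 * r + 2 + j)))) => // j rj /=.
by rewrite -!mulrA mulrA -exprD; apply: fps_eqn_qXnM; nia.
Qed.

Lemma lhs_termE m i : lhs_term m.+1 i = q ^+ (m * (i * i + 2 * i)) * alpha i * q ^+ (i * i).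
Proof.
have q1 : qpoch 1 = 1 - q ^+ 1 by rewrite qpochS qpoch0 mul1r.
rewrite /lhs_term !fps_mulE fps_addE !fps_subE fps1E fps_expE !fpsXE -q1.
rewrite fps_invE ?qpoch_unit // /alpha mulnn.
rewrite (_ : m.+1 * (i ^ 2 + 2 * i) - 2 * i = m * (i ^ 2 + 2 * i) + i ^ 2)%N; last first.
  by rewrite mulSn; lia.
by rewrite exprD; ring.
Qed.

Lemma qpoch_mul_sum_bailey_chain m N :
  fps_eqn N (qpoch N * \sum_(k < N.+1) bailey_chain m k) (\sum_(i < N.+1) lhs_term m.+1 i).
Proof.
rewrite sum_bailey_chainE mulr_sumr; apply: fps_eqn_sum => r _; rewrite lhs_termE.
have key : fps_eqn N (qpoch N * (q ^+ (r * r) * durfee_partial (2 * r + 2) (N.+1 - r)))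
    (q ^+ (r * r) * 1).
  apply: fps_eqn_trans (fps_eqnMl _ (fps_eqn_sym (durfee_partial_tail (leq_subr r N.+1)))) _.
  by rewrite mulrCA; apply: fps_eqnMl; exact: qpoch_mul_durfee_partial.
have := fps_eqnMl (q ^+ (m * (r * r + 2 * r)) * alpha r) key.
by rewrite mulr1 mulrCA !mulrA; apply.
Qed.

Definition fps_stable (s : nat -> fps) :=
  forall n M, (n < M)%N -> fps_eqn n (s M) (s n.+1).

Lemma fps_lim_stable s : fps_stable s -> fps_lim s (fun n => s n.+1 n).
Proof. by move=> st n; exists n.+1 => M nM; apply: st. Qed.

Lemma fps_eqn_stable_lim s N : fps_stable s -> fps_eqn N (fun n => s n.+1 n) (s N.+1).
Proof. by move=> st i iN; rewrite /= (st i N.+1). Qed.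

Lemma qpoch_stable : fps_stable qpoch.
Proof. by move=> n M /ltnW nM; apply: fps_eqn_trans (qpoch_eqn nM) (fps_eqn_sym (qpoch_eqn _)). Qed.

Lemma lhs_partialE m M : lhs_partial m M = \sum_(i < M) lhs_term m i.
Proof. by apply: functional_extensionality_dep => n; rewrite coef_fps_sum. Qed.

Lemma lhs_partial_stable m : fps_stable (lhs_partial m.+1).
Proof.
move=> n M nM; rewrite !lhs_partialE; apply: fps_eqn_sum_tail => // j nj.
by rewrite lhs_termE mulrC; apply: fps_eqn_qXnM; nia.
Qed.

Lemma rhs_partial_stable m : fps_stable (rhs_partial m.+1).
Proof.
move=> n M nM; rewrite !rhs_partialE; apply: fps_eqn_sum_tail => // k nk.
by rewrite bailey_chainE; apply: fps_eqn_qXnM; nia.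
Qed.

Theorem theorem4p3 (m : nat) (hm : (0 < m)%N) :
  exists L R P : fps,
    fps_lim (lhs_partial m) L /\ fps_lim (rhs_partial m) R /\ fps_lim qpoch P /\
    L = fps_mul P R.
Proof.
case: m hm => // m _.
have stL := lhs_partial_stable m; have stR := rhs_partial_stable m.
do 3!eexists; split; [exact: fps_lim_stable stL|split; [exact: fps_lim_stable stR|split]].
  exact: fps_lim_stable qpoch_stable.
apply: functional_extensionality_dep => N; rewrite fps_mulE.
rewrite (fps_eqnM (fps_eqn_stable_lim (N := N) qpoch_stable) (fps_eqn_stable_lim (N := N) stR)) //=.
rewrite lhs_partialE rhs_partialE (fps_eqnM (qpoch_eqn (leqnSn N)) (@fps_eqn_refl N _)) //.
by rewrite (@qpoch_mul_sum_bailey_chain m N N).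
Qed.
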